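(* Let $n,k$ be integers with $2\le k\le n$, let $\varepsilon\in[0,1)$ and let $\gamma:=\frac{k(n-k)}{2n(n-1)}$. Let $\mathcal{I}=(I_1,\dots,I_m)$ be a finite sequence of $k$-element subsets of $[n]$ such that: (1) for every $i\in[n]$, the fraction $f_{ii}:=\frac{1}{m}|\{\ell\in[m]: i\in I_\ell\}|$ lies in $\left[\frac{k}{n}-\varepsilon\gamma,\frac{k}{n}+\varepsilon\gamma\right]$; (2) for every pair of distinct $i,j\in[n]$, the fraction $f_{ij}:=\frac{1}{m}|\{\ell\in[m]: \{i,j\}\subseteq I_\ell\}|$ lies in $\left[\frac{k(k-1)}{n(n-1)}-\varepsilon\gamma,\frac{k(k-1)}{n(n-1)}+\varepsilon\gamma\right]$. Then there is a scaling $\alpha>0$ such that for all matrices $M\in\mathbb{R}^{n\times n}$, $$\|M-\alpha\,T_{\mathcal{I}}(M)\|_F\le(1+\varepsilon)\frac{n-k}{n+k-2}\|M\|_F.$$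
   Context: For $M\in\mathbb{R}^{n\times n}$ and $I\subseteq[n]$, $M^I$ denotes the $n\times n$ matrix obtained from $M$ by setting to zero all entries outside rows and columns indexed by $I$ (i.e. $(M^I)_{ij}=M_{ij}$ if $i,j\in I$ and $0$ otherwise). The partial averaging operator is $T_{\mathcal{I}}(M):=\frac{1}{m}\sum_{\ell=1}^m M^{I_\ell}$ (the sum taken over the sequence, with multiplicity). $\|\cdot\|_F$ is the Frobenius norm. *)

From HB Require Import structures.
From mathcomp Require Import all_boot all_order all_algebra.
From mathcomp Require Import reals.
Set Implicit Arguments. Unset Strict Implicit. Unset Printing Implicit Defensive.
Import Order.TTheory GRing.Theory Num.Theory.
Local Open Scope ring_scope.

Definition restrmx (R : realType) (n : nat) (I : {set 'I_n}) (M : 'M[R]_n) : 'M[R]_n :=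
  \matrix_(i, j) (if (i \in I) && (j \in I) then M i j else 0).

Definition Tavg (R : realType) (n m : nat) (I : 'I_m -> {set 'I_n}) (M : 'M[R]_n)
  : 'M[R]_n := (m%:R)^-1 *: \sum_(l < m) restrmx (I l) M.

Definition frob (R : realType) (n : nat) (M : 'M[R]_n) : R :=
  Num.sqrt (\sum_(i < n) \sum_(j < n) M i j ^+ 2).

Definition fdiag (R : realType) (n m : nat) (I : 'I_m -> {set 'I_n}) (i : 'I_n) : R :=
  #|[set l : 'I_m | i \in I l]|%:R / m%:R.
Definition fpair (R : realType) (n m : nat) (I : 'I_m -> {set 'I_n}) (i j : 'I_n) : R :=
  #|[set l : 'I_m | (i \in I l) && (j \in I l)]|%:R / m%:R.

Definition gammak (R : realType) (n k : nat) : R :=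
  (k%:R * (n%:R - k%:R)) / (2 * n%:R * (n%:R - 1)).

(* [T_I] is the Schur (entrywise) multiplier by the co-occurrence frequencies
   [f_ij], so [M - alpha T_I(M)] multiplies the entry [(i, j)] by
   [1 - alpha f_ij].  All frequencies lie in [[q - eps g, p + eps g]] with
   [p = k/n] and [q = k(k-1)/(n(n-1))]; choosing [alpha = 2 / (p + q)] maps
   this interval onto [[-c, c]] with [c = (1 + eps)(n - k)/(n + k - 2)], so
   every entry, hence the Frobenius norm, shrinks by at least [c]. *)

From HB Require Import structures.
From mathcomp Require Import all_boot all_order all_algebra.
From mathcomp Require Import reals.
From mathcomp Require Import ring lra.
Set Implicit Arguments.
Unset Strict Implicit.
Unset Printing Implicit Defensive.

Import Order.TTheory GRing.Theory Num.Theory.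
Local Open Scope ring_scope.

Section ContractionFactor.

Variables (R : realFieldType) (N K eps : R).

Let p := K / N.
Let q := K * (K - 1) / (N * (N - 1)).
Let g := K * (N - K) / (2 * N * (N - 1)).
Let c := (1 + eps) * ((N - K) / (N + K - 2)).

Lemma freq_denoms_neq0 (K_ge2 : 2 <= K) (K_leN : K <= N) :
  [/\ N != 0, N - 1 != 0, K != 0 & N + K - 2 != 0].
Proof. by split; apply: lt0r_neq0; lra. Qed.

Lemma pair_freq_le_diag_freq (K_ge2 : 2 <= K) (K_leN : K <= N) : q <= p.
Proof.
have [N0 N1 _ _] := freq_denoms_neq0 K_ge2 K_leN.
have -> : p = q + K * (N - K) / (N * (N - 1)) by rewrite /p /q; field; apply/andP.
by rewrite lerDl divr_ge0 // mulr_ge0 //; lra.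
Qed.

Lemma scaling_factorE (K_ge2 : 2 <= K) (K_leN : K <= N) :
  2 / (p + q) = 2 * N * (N - 1) / (K * (N + K - 2)).
Proof.
have [N0 N1 K0 NK2] := freq_denoms_neq0 K_ge2 K_leN.
rewrite /p /q; field; rewrite NK2 K0 N1 N0 /=.
have -> : K * (N - 1) + K * (K - 1) = K * (N + K - 2) by ring.
exact: mulf_neq0.
Qed.

Lemma scaling_factor_gt0 (K_ge2 : 2 <= K) (K_leN : K <= N) : 0 < 2 / (p + q).
Proof. by rewrite scaling_factorE // divr_gt0 // !mulr_gt0 //; lra. Qed.

Lemma contraction_factor_ge0 (K_ge2 : 2 <= K) (K_leN : K <= N) (eps_ge0 : 0 <= eps) :
  0 <= c.
Proof. by rewrite mulr_ge0 // ?divr_ge0 //; lra. Qed.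

Lemma contraction_factor_bound (K_ge2 : 2 <= K) (K_leN : K <= N) (f : R) :
  q - eps * g <= f <= p + eps * g -> `|1 - 2 / (p + q) * f| <= c.
Proof.
move=> /andP[f_ge f_le].
have [N0 N1 K0 NK2] := freq_denoms_neq0 K_ge2 K_leN.
have alpha_ge0 := ltW (scaling_factor_gt0 K_ge2 K_leN).
have lowE : 1 - 2 / (p + q) * (q - eps * g) = c.
  by rewrite scaling_factorE // /q /g /c; field; rewrite NK2 N1 N0 K0.
have highE : 1 - 2 / (p + q) * (p + eps * g) = - c.
  by rewrite scaling_factorE // /p /g /c; field; rewrite NK2 N1 N0 K0.
by rewrite ler_norml -{1}highE -lowE !lerD2l !lerN2 !ler_wpM2l.
Qed.

End ContractionFactor.

Section PartialAveraging.

Variables (R : realType) (n m : nat) (I : 'I_m -> {set 'I_n}).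

Lemma Tavg_entry (M : 'M[R]_n) i j : Tavg I M i j = fpair R I i j * M i j.
Proof.
rewrite /Tavg !mxE summxE.
under eq_bigr => l _ do rewrite /restrmx mxE.
rewrite -big_mkcond /= sumr_const /fpair -[M i j *+ _]mulr_natr.
have -> : #|(fun l => (i \in I l) && (j \in I l))| = #|[set l | i \in I l & j \in I l]|.
  by apply: eq_card => l; rewrite inE.
by rewrite mulrCA mulrC [_^-1 * _]mulrC.
Qed.

Lemma fpair_diag i : fpair R I i i = fdiag R I i.
Proof. by rewrite /fpair /fdiag; congr (_%:R / _); apply: eq_card => l; rewrite !inE andbb. Qed.

End PartialAveraging.

Lemma frob_le_entrywise (R : realType) (n : nat) (M A : 'M[R]_n) (c : R) :
  0 <= c -> (forall i j, `|A i j| <= c * `|M i j|) -> frob A <= c * frob M.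
Proof.
move=> c_ge0 A_le.
have sum_sqr_ge0 (X : 'M[R]_n) : 0 <= \sum_i \sum_j X i j ^+ 2.
  by apply: sumr_ge0 => i _; apply: sumr_ge0 => j _; exact: sqr_ge0.
rewrite /frob -[c]ger0_norm // -sqrtr_sqr -sqrtrM ?sqr_ge0 // ler_sqrt; last first.
  by rewrite mulr_ge0 ?sqr_ge0.
rewrite mulr_sumr; apply: ler_sum => i _; rewrite mulr_sumr; apply: ler_sum => j _.
rewrite -exprMn -(real_normK (num_real (A i j))) -(real_normK (num_real (c * _))).
by rewrite lerXn2r ?nnegrE ?normr_ge0 // normrM (ger0_norm c_ge0).
Qed.

Theorem lemma8 (R : realType) (n k : nat) (hk2 : (2 <= k)%N) (hkn : (k <= n)%N)
  (eps : R) (heps0 : 0 <= eps) (heps1 : eps < 1)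
  (m : nat) (hm : (0 < m)%N) (I : 'I_m -> {set 'I_n})
  (hcard : forall l, #|I l| = k)
  (h1 : forall i : 'I_n,
     k%:R / n%:R - eps * gammak R n k <= fdiag R I i <= k%:R / n%:R + eps * gammak R n k)
  (h2 : forall i j : 'I_n, i != j ->
     (k%:R * (k%:R - 1)) / (n%:R * (n%:R - 1)) - eps * gammak R n k <= fpair R I i j
     <= (k%:R * (k%:R - 1)) / (n%:R * (n%:R - 1)) + eps * gammak R n k) :
  exists alpha : R, 0 < alpha /\
    forall M : 'M[R]_n,
      frob (M - alpha *: Tavg I M)
        <= (1 + eps) * ((n%:R - k%:R) / (n%:R + k%:R - 2)) * frob M.
Proof.
have K_ge2 : 2 <= k%:R :> R by rewrite (ler_nat R 2 k).
have K_leN : k%:R <= n%:R :> R by rewrite ler_nat.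
have q_le_p := pair_freq_le_diag_freq K_ge2 K_leN.
have freq_range i j : k%:R * (k%:R - 1) / (n%:R * (n%:R - 1)) - eps * gammak R n k
    <= fpair R I i j <= k%:R / n%:R + eps * gammak R n k.
  have [<-|/h2] := eqVneq i j; last by move=> /andP[? ?]; apply/andP; split; lra.
  by rewrite fpair_diag; move: (h1 i) => /andP[? ?]; apply/andP; split; lra.
eexists; split; first exact: scaling_factor_gt0 K_ge2 K_leN.
move=> M; apply: frob_le_entrywise; first exact: contraction_factor_ge0.
move=> i j; rewrite 3!mxE Tavg_entry mulrA -{1}[M i j]mul1r -mulrBl normrM.
by rewrite ler_wpM2r // contraction_factor_bound.
Qed.
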